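(* Let $G=(V,E)$ be a graph with arboricity $\alpha$, let $\mu$ be an orientation of its edges with out-degree at most $2\alpha$, let $h\le\log\alpha$, and consider Procedure Oriented Edge-Coloring$(G,\mu,h)$. For every $0\le i\le h$, every graph $G^{(i)}$ computed after $i$ levels of recursion, and every $v\in V$, $$\frac{\mathrm{indeg}(v)}{2^i}-1\le\mathrm{indeg}^{(i)}(v)\le\frac{\mathrm{indeg}(v)}{2^i}+1\quad\text{and}\quad\frac{\mathrm{outdeg}(v)}{2^i}-1\le\mathrm{outdeg}^{(i)}(v)\le\frac{\mathrm{outdeg}(v)}{2^i}+1,$$ where $\mathrm{indeg},\mathrm{outdeg}$ are taken in $G$ and $\mathrm{indeg}^{(i)},\mathrm{outdeg}^{(i)}$ in $G^{(i)}$, with respect to $\mu$.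
   Context: Logarithms are base 2. The arboricity of $G$ is $\max_{S\subseteq V,|S|\ge2}\lceil |E(G[S])|/(|S|-1)\rceil$. An oriented degree-splitting of $(H,\mu)$ with discrepancy $\kappa$ is a partition $(E_1,E_2)$ of $E(H)$ such that for every vertex $v$, the numbers of incoming edges of $v$ in $E_1$ and in $E_2$ differ by at most $\kappa$, and likewise for outgoing edges. Procedure Oriented Edge-Coloring$(H,\mu,h)$: if $h=0$, return a proper $(\Delta(H)+1)$-edge-coloring of $H$ from a base-case subroutine; otherwise compute an oriented degree-splitting $(E_1,E_2)$ of $(H,\mu)$ with discrepancy at most 1, recursively call Oriented Edge-Coloring$(H_1,\mu,h-1)$ and Oriented Edge-Coloring$(H_2,\mu,h-1)$ on $H_1=(V,E_1)$, $H_2=(V,E_2)$ (with the orientation induced by $\mu$), and merge the colorings using disjoint palettes. $G^{(0)}=G$, and a graph computed after $i$ levels of recursion is any $H_1$ or $H_2$ produced from a graph computed after $i-1$ levels. *)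

From HB Require Import structures.
From mathcomp Require Import all_boot all_order all_algebra.
Set Implicit Arguments. Unset Strict Implicit. Unset Printing Implicit Defensive.
Import Order.TTheory GRing.Theory Num.Theory.

(* A (simple, undirected) graph on a finite vertex type V is a symmetric,
   irreflexive relation e.  An oriented (sub)graph is a set of arcs (u,v)
   = "edge directed from u to v". *)

Section Graphs.
Variable V : finType.

Definition simple_graph (e : rel V) : Prop :=
  (forall u, ~~ e u u) /\ (forall u v, e u v = e v u).

Definition orientation_of (e : rel V) (mu : {set V * V}) : Prop :=
  (forall a, a \in mu -> e a.1 a.2) /\
  (forall u v, e u v -> ((u, v) \in mu) (+) ((v, u) \in mu)).

Definition edges_in (e : rel V) (S : {set V}) : {set {set V}} :=
  [set [set u; v] | u in S, v in S & e u v].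

Definition ceil_div (m n : nat) : nat := (m + n.-1) %/ n.

Definition arboricity (e : rel V) : nat :=
  \max_(S : {set V} | 1 < #|S|) ceil_div #|edges_in e S| (#|S| - 1).

Definition indeg (H : {set V * V}) (v : V) : nat := #|[set a in H | a.2 == v]|.
Definition outdeg (H : {set V * V}) (v : V) : nat := #|[set a in H | a.1 == v]|.

Definition close (k m n : nat) : bool := (m <= n + k) && (n <= m + k).

Definition oriented_degree_splitting (H E1 E2 : {set V * V}) (kappa : nat) : Prop :=
  [/\ E1 :|: E2 = H, E1 :&: E2 = set0,
      (forall v, close kappa (indeg E1 v) (indeg E2 v)) &
      (forall v, close kappa (outdeg E1 v) (outdeg E2 v))].

(* computed_after mu i H : H is a graph computed after i levels of recursion
   of Procedure Oriented Edge-Coloring started at (G, mu); the orientation of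
   H is the one induced by mu (H is a set of arcs of mu). *)
Inductive computed_after (mu : {set V * V}) : nat -> {set V * V} -> Prop :=
  | computed0 : computed_after mu 0 mu
  | computed_left i H E1 E2 :
      computed_after mu i H -> oriented_degree_splitting H E1 E2 1 ->
      computed_after mu i.+1 E1
  | computed_right i H E1 E2 :
      computed_after mu i H -> oriented_degree_splitting H E1 E2 1 ->
      computed_after mu i.+1 E2.

End Graphs.

From HB Require Import structures.
From mathcomp Require Import all_boot all_order all_algebra.
From mathcomp Require Import lra.
Import Order.TTheory GRing.Theory Num.Theory.
Set Implicit Arguments. Unset Strict Implicit.
Local Open Scope ring_scope.

(* If |deg H - t| <= 1 and H splits into E1, E2 with |deg E1 - deg E2| <= 1,
   then 2 deg E1 - t = (deg H - t) + (deg E1 - deg E2) has absolute value at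
   most 2, so deg E1 (and likewise deg E2) is within 1 of t/2.  Induction on
   the recursion depth gives |deg G^(i) - deg G / 2^i| <= 1 for in- and
   out-degrees alike. *)

Lemma card_setU_sep_disjoint (T : finType) (A B : {set T}) (P : pred T) :
  A :&: B = set0 ->
  #|[set x in A :|: B | P x]| = (#|[set x in A | P x]| + #|[set x in B | P x]|)%N.
Proof.
move=> disjAB; rewrite !setIdE setIUl cardsU setIACA disjAB set0I cards0.
exact: subn0.
Qed.

Lemma indeg_setU (V : finType) (E1 E2 : {set V * V}) (v : V) :
  E1 :&: E2 = set0 -> indeg (E1 :|: E2) v = (indeg E1 v + indeg E2 v)%N.
Proof. exact: card_setU_sep_disjoint. Qed.

Lemma outdeg_setU (V : finType) (E1 E2 : {set V * V}) (v : V) :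
  E1 :&: E2 = set0 -> outdeg (E1 :|: E2) v = (outdeg E1 v + outdeg E2 v)%N.
Proof. exact: card_setU_sep_disjoint. Qed.

Lemma close_dist (R : realDomainType) (k m n : nat) :
  close k m n -> `|m%:R - n%:R| <= k%:R :> R.
Proof.
by case/andP=> le_mn le_nm; rewrite ler_distl lerBlDr -!natrD !ler_nat le_mn le_nm.
Qed.

Lemma dist_half_sum (R : realFieldType) (x y t : R) :
  `|x + y - t| <= 1 -> `|x - y| <= 1 -> `|x - t / 2| <= 1.
Proof. by rewrite !ler_distl => /andP[? ?] /andP[? ?]; apply/andP; split; lra. Qed.

Section DegreeHalving.

Variables (V : finType) (R : realFieldType) (deg : {set V * V} -> V -> nat).

Hypothesis deg_setU : forall E1 E2 v,
  E1 :&: E2 = set0 -> deg (E1 :|: E2) v = (deg E1 v + deg E2 v)%N.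

Hypothesis close_deg_splitting : forall H E1 E2,
  oriented_degree_splitting H E1 E2 1 -> forall v, close 1 (deg E1 v) (deg E2 v).

Lemma splitting_halves_deg H E1 E2 v (t : R) :
  oriented_degree_splitting H E1 E2 1 -> `|(deg H v)%:R - t| <= 1 ->
  `|(deg E1 v)%:R - t / 2| <= 1 /\ `|(deg E2 v)%:R - t / 2| <= 1.
Proof.
move=> splitH; have [<- disjE _ _] := splitH.
rewrite deg_setU // natrD => le_sum.
have le_diff := close_dist R (close_deg_splitting splitH v).
split; first exact: dist_half_sum le_sum le_diff.
rewrite (addrC (deg E1 v)%:R) in le_sum; rewrite distrC in le_diff.
exact: dist_half_sum le_sum le_diff.
Qed.

Lemma computed_after_deg_dist mu i H :
  computed_after mu i H ->
  forall v, `|(deg H v)%:R - (deg mu v)%:R / 2 ^+ i| <= 1 :> R.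
Proof.
have halve j v : (deg mu v)%:R / 2 ^+ j.+1 = (deg mu v)%:R / 2 ^+ j / 2 :> R.
  by rewrite exprSr invfM mulrA.
elim=> [|j H' E1 E2 _ IH splitH|j H' E1 E2 _ IH splitH] v.
- by rewrite expr0 divr1 subrr normr0.
- by rewrite halve; case: (splitting_halves_deg splitH (IH v)).
- by rewrite halve; case: (splitting_halves_deg splitH (IH v)).
Qed.

End DegreeHalving.

Theorem lemma4p8 (V : finType) (e : rel V) (mu : {set V * V}) (h : nat) :
  simple_graph e ->
  orientation_of e mu ->
  (forall v, (outdeg mu v <= 2 * arboricity e)%N) ->
  (2 ^ h <= arboricity e)%N ->   (* h <= log2 (arboricity) *)
  forall (i : nat) (Hi : {set V * V}), (i <= h)%N ->
  computed_after mu i Hi ->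
  forall v : V,
    ((indeg mu v)%:R / 2%:R ^+ i - 1 <= ((indeg Hi v)%:R : rat)) /\
    (((indeg Hi v)%:R : rat) <= (indeg mu v)%:R / 2%:R ^+ i + 1) /\
    ((outdeg mu v)%:R / 2%:R ^+ i - 1 <= ((outdeg Hi v)%:R : rat)) /\
    (((outdeg Hi v)%:R : rat) <= (outdeg mu v)%:R / 2%:R ^+ i + 1).
Proof.
move=> _ _ _ _ i Hi _ computedHi v.
have := computed_after_deg_dist rat (@indeg_setU V)
  (fun _ _ _ '(And4 _ _ close_in _) => close_in) computedHi v.
have := computed_after_deg_dist rat (@outdeg_setU V)
  (fun _ _ _ '(And4 _ _ _ close_out) => close_out) computedHi v.
by rewrite !ler_distl => /andP[? ?] /andP[? ?].
Qed.
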